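(* Let $\mathcal M=(S,L,\tau,\ell)$ be an LMC (possibly with infinitely many states). There is a policy $T$ such that for all $(s,t)\in S^2$ and all policies $T'$, \[ d(s,t)=\mathcal R^T_{\mathcal M}((s,t),S^2_1)\le\mathcal R^{T'}_{\mathcal M}((s,t),S^2_1). \] In particular $d=\min_{T}\mathcal R^T_{\mathcal M}(\cdot,S^2_1)$, the minimum being over all policies.
   Context: An LMC $\mathcal M=(S,L,\tau,\ell)$ has a nonempty countable state set $S$, finite label set $L$, finitely-branching transition function $\tau:S\to\mathrm{Distr}(S)$ and labelling $\ell$. The probabilistic bisimilarity distance $d$ is the least fixed point of $\Delta(e)(s,t)=1$ if $\ell(s)\ne\ell(t)$ and $\Delta(e)(s,t)=\min_{\omega\in\Omega(\tau(s),\tau(t))}\sum_{u,v}\omega(u,v)e(u,v)$ otherwise, where $\Omega(\mu,\nu)$ is the set of couplings (distributions on $S\times S$ with marginals $\mu,\nu$). Probabilistic bisimilarity $\sim$ is the largest equivalence $R$ on $S$ such that $(s,t)\in R$ implies $\ell(s)=\ell(t)$ and $\tau(s)(E)=\tau(t)(E)$ for every $R$-class $E$. Partition $S^2$ into $S^2_0=\{(s,t):s\sim t\}$, $S^2_1=\{(s,t):\ell(s)\ne\ell(t)\}$, $S^2_?=S^2\setminus(S^2_0\cup S^2_1)$. A policy is a map $T:S^2_?\to\mathrm{Distr}(S^2)$ with $T(s,t)\in\Omega(\tau(s),\tau(t))$. The Markov chain $\mathcal C^T_{\mathcal M}$ on $S^2$ has every pair in $S^2_0\cup S^2_1$ absorbing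 and from $(u,v)\in S^2_?$ moves to $(x,y)$ with probability $T(u,v)(x,y)$. $\mathcal R^T_{\mathcal M}((s,t),Z)$ is the probability that $\mathcal C^T_{\mathcal M}$ started in $(s,t)$ reaches $Z\subseteq S^2$. *)

From HB Require Import structures.
From mathcomp Require Import all_boot all_order all_algebra.
From mathcomp Require Import all_classical all_reals all_analysis.
Set Implicit Arguments. Unset Strict Implicit. Unset Printing Implicit Defensive.
Import Order.TTheory GRing.Theory Num.Theory.
Local Open Scope classical_set_scope.
Local Open Scope ring_scope.

Section LMC.
Context {R : realType}.

Definition is_distr (X : choiceType) (mu : X -> R) : Prop :=
  (forall x, 0 <= mu x) /\ (\esum_(x in [set: X]) (mu x)%:E = 1%E).

Definition mass (X : choiceType) (mu : X -> R) (E : set X) : \bar R :=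
  \esum_(x in E) (mu x)%:E.

Definition coupling (X : choiceType) (mu nu : X -> R) (omega : X * X -> R) : Prop :=
  is_distr omega /\
  (forall u, \esum_(v in [set: X]) (omega (u, v))%:E = (mu u)%:E) /\
  (forall v, \esum_(u in [set: X]) (omega (u, v))%:E = (nu v)%:E).

Context {S : countType} {L : finType}.
Variables (tau : S -> S -> R) (ell : S -> L).

Definition is_LMC : Prop :=
  forall s, is_distr (tau s) /\ finite_set [set u | tau s u != 0].

Definition prob_bisimulation (Rel : S -> S -> Prop) : Prop :=
  (forall s, Rel s s) /\ (forall s t, Rel s t -> Rel t s) /\
  (forall s t u, Rel s t -> Rel t u -> Rel s u) /\
  (forall s t, Rel s t ->
     ell s = ell t /\
     forall w : S, mass (tau s) [set u | Rel u w] = mass (tau t) [set u | Rel u w]).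

(* probabilistic bisimilarity: membership in the largest probabilistic
   bisimulation, i.e. in some probabilistic bisimulation *)
Definition bisimilar (s t : S) : Prop :=
  exists Rel, prob_bisimulation Rel /\ Rel s t.

Definition Delta (e : S * S -> R) (p : S * S) : R :=
  if ell p.1 != ell p.2 then 1
  else inf [set x : R | exists omega, coupling (tau p.1) (tau p.2) omega /\
              x = fine (\esum_(q in [set: S * S]) (omega q * e q)%:E)].

Definition unit_valued (e : S * S -> R) : Prop := forall p, 0 <= e p <= 1.

(* least fixed point of Delta on the complete lattice [0,1]^(S^2), given by
   the Knaster-Tarski formula: pointwise infimum of all pre-fixed points *)
Definition bisim_dist (p : S * S) : R :=
  inf [set e p | e in [set e : S * S -> R | unit_valued e /\
                         forall q, Delta e q <= e q]].

Definition S2_0 : set (S * S) := [set p | bisimilar p.1 p.2].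
Definition S2_1 : set (S * S) := [set p | ell p.1 <> ell p.2].
Definition S2_q : set (S * S) := ~` (S2_0 `|` S2_1).

(* a policy (only its values on S2_q matter) *)
Definition policy (T : S * S -> S * S -> R) : Prop :=
  forall p, S2_q p -> coupling (tau p.1) (tau p.2) (T p).

Definition chainP (T : S * S -> S * S -> R) (x y : S * S) : R :=
  if `[< S2_q x >] then T x y else (y == x)%:R.

Fixpoint reach_within (T : S * S -> S * S -> R) (Z : set (S * S)) (n : nat)
  (x : S * S) : R :=
  if `[< Z x >] then 1 else
  match n with
  | 0 => 0
  | n'.+1 => fine (\esum_(y in [set: S * S])
                     (chainP T x y * reach_within T Z n' y)%:E)
  end.

Definition reach_prob (T : S * S -> S * S -> R) (Z : set (S * S)) (x : S * S) : R :=
  sup [set reach_within T Z n x | n in [set: nat]].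

End LMC.

(* The distance [d] is the least fixed point of [Delta], hence lies below every
   pre-fixed point of [Delta].  For any policy [T'] the reachability probability
   [R^T'(., S2_1)] is such a pre-fixed point: it is 1 on [S2_1], it satisfies
   the one-step equation with the coupling [T'] on [S2_?], and it vanishes on
   [S2_0], where [Delta] can use a coupling supported on bisimilar pairs.
   Conversely, since every [tau s] has finite support, the couplings of [tau s]
   and [tau t] form a compact set of functions, so the infimum defining
   [Delta d] is attained.  The policy [T] choosing these optimal couplings
   satisfies [R^T <= d], by induction on the number of steps. *)

From HB Require Import structures.
From mathcomp Require Import all_boot all_order all_algebra.
From mathcomp Require Import all_classical all_reals all_analysis.
From mathcomp Require Import ring.
Set Implicit Arguments. Unset Strict Implicit. Unset Printing Implicit Defensive.
Import Order.TTheory GRing.Theory Num.Theory.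
Import numFieldNormedType.Exports.
Local Open Scope classical_set_scope.
Local Open Scope ring_scope.

Section finite_support_sums.
Context {R : realType} {T : choiceType}.

Lemma esumT_seq (h : T -> R) (l : seq T) :
  uniq l -> (forall x, 0 <= h x) -> (forall x, x \notin l -> h x = 0) ->
  \esum_(x in [set: T]) (h x)%:E = (\sum_(x <- l) h x)%:E.
Proof.
move=> ul h0 hl.
rewrite (esumID [set` l]); last by move=> x _; rewrite lee_fin.
rewrite [X in _ + X]esum1 ?adde0; last first.
  by move=> x [_ /= xl]; rewrite hl //; apply/negP.
rewrite setTI esum_fset; last 2 first.
- exact: finite_seq.
- by move=> x _; rewrite lee_fin.
by rewrite fsumEFin ?finite_seq // -fsbig_seq.
Qed.

Lemma esum_seq (D : set T) (h : T -> R) (l : seq T) :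
  uniq l -> (forall x, 0 <= h x) -> (forall x, x \notin l -> h x = 0) ->
  \esum_(x in D) (h x)%:E = (\sum_(x <- l | x \in D) h x)%:E.
Proof.
move=> ul h0 hl; rewrite esum_mkcond.
rewrite (eq_esum (b := fun x => (if x \in D then h x else 0)%:E)); last first.
  by move=> x _; case: ifP.
rewrite (esumT_seq ul) ?[in RHS]big_mkcond // => x; first by case: ifP.
by case: ifP => // _ /hl.
Qed.

Lemma esum_ge_term (h : T -> R) (x : T) :
  (forall y, 0 <= h y) -> ((h x)%:E <= \esum_(y in [set: T]) (h y)%:E)%E.
Proof.
move=> h0; apply: esum_ge; exists [set x]; last by rewrite fsbig_set1.
by split; [exact: finite_set1 | by []].
Qed.

End finite_support_sums.

Lemma sum_seq_ge_term (R : numDomainType) (T : eqType) (l : seq T) (P : pred T)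
    (h : T -> R) (x : T) :
  uniq l -> x \in l -> P x -> (forall y, 0 <= h y) ->
  h x <= \sum_(y <- l | P y) h y.
Proof.
move=> ul xl Px h0; rewrite big_mkcond (bigD1_seq x) //= Px lerDl.
by apply: sumr_ge0 => y _; case: ifP.
Qed.

Section LMC.
Variables (R : realType) (S : countType) (L : finType).
Variables (tau : S -> S -> R) (ell : S -> L).
Hypothesis tau_LMC : is_LMC tau.

(* With these finite supports every [\esum] in the definitions becomes a finite
   sum over [supp s] or over [supp2 s t]. *)
Variable supp : S -> seq S.
Hypothesis supp_uniq : forall s, uniq (supp s).
Hypothesis supp_spec : forall s u, tau s u != 0 -> u \in supp s.

Lemma tau_ge0 s u : 0 <= tau s u.
Proof. by have [[h _] _] := tau_LMC s; apply: h. Qed.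

Lemma tau_eq0 s u : u \notin supp s -> tau s u = 0.
Proof. by move=> h; apply/eqP; apply: contraNT h; apply: supp_spec. Qed.

Lemma sum_tau s : \sum_(u <- supp s) tau s u = 1.
Proof.
have [[_ h] _] := tau_LMC s.
by move: h; rewrite (esumT_seq (supp_uniq s) (tau_ge0 s) (@tau_eq0 s)) => -[].
Qed.

Definition supp2 (s t : S) : seq (S * S) := [seq (u, v) | u <- supp s, v <- supp t].

Lemma supp2_uniq s t : uniq (supp2 s t).
Proof. by apply: allpairs_uniq => // -[a b] [c d] _ _ /= [-> ->]. Qed.

Lemma mem_supp2 s t u v : ((u, v) \in supp2 s t) = (u \in supp s) && (v \in supp t).
Proof.
apply/idP/idP; last by case/andP => hu hv; apply: (allpairs_f pair hu hv).
by case/allpairsP => -[a b] /= [ha hb [-> ->]]; rewrite ha hb.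
Qed.

Lemma big_supp2 s t (F : S * S -> R) :
  \sum_(q <- supp2 s t) F q = \sum_(u <- supp s) \sum_(v <- supp t) F (u, v).
Proof. exact: big_allpairs. Qed.

Definition cost s t (w e : S * S -> R) : R := \sum_(q <- supp2 s t) w q * e q.

Section coupling_of_pair.
Variables (s t : S) (w : S * S -> R).
Hypothesis w_coupling : coupling (tau s) (tau t) w.

Lemma coupling_ge0 q : 0 <= w q.
Proof. by case: w_coupling => [[h _] _]; apply: h. Qed.

Lemma coupling_eq0 q : q \notin supp2 s t -> w q = 0.
Proof.
case: q => u v; rewrite mem_supp2 negb_and => h.
case: w_coupling => _ [wr wc].
apply/eqP; rewrite eq_le coupling_ge0 andbT -lee_fin.
case/orP: h => h.
  rewrite -(tau_eq0 h) -wr.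
  by apply: esum_ge_term => y; apply: coupling_ge0.
rewrite -(tau_eq0 h) -wc.
by apply: esum_ge_term => y; apply: coupling_ge0.
Qed.

Lemma coupling_row u : \sum_(v <- supp t) w (u, v) = tau s u.
Proof.
case: w_coupling => _ [wr _]; move: (wr u).
rewrite (esumT_seq (supp_uniq t)); first by case.
- by move=> y; apply: coupling_ge0.
- by move=> y hy; apply: coupling_eq0; rewrite mem_supp2 (negbTE hy) andbF.
Qed.

Lemma coupling_col v : \sum_(u <- supp s) w (u, v) = tau t v.
Proof.
case: w_coupling => _ [_ wc]; move: (wc v).
rewrite (esumT_seq (supp_uniq s)); first by case.
- by move=> y; apply: coupling_ge0.
- by move=> y hy; apply: coupling_eq0; rewrite mem_supp2 (negbTE hy).
Qed.

Lemma coupling_sum : \sum_(q <- supp2 s t) w q = 1.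
Proof.
by rewrite big_supp2 -(sum_tau s); apply: eq_bigr => u _; rewrite coupling_row.
Qed.

Lemma esum_cost (e : S * S -> R) : (forall q, 0 <= e q) ->
  fine (\esum_(q in [set: S * S]) (w q * e q)%:E) = cost s t w e.
Proof.
move=> e0; rewrite (esumT_seq (supp2_uniq s t)) //.
- by move=> q; rewrite mulr_ge0 // coupling_ge0.
- by move=> q hq; rewrite coupling_eq0 // mul0r.
Qed.

Lemma cost_ge0 e : (forall q, 0 <= e q) -> 0 <= cost s t w e.
Proof. by move=> e0; apply: sumr_ge0 => q _; rewrite mulr_ge0 ?coupling_ge0. Qed.

Lemma ler_cost e e' : (forall q, e q <= e' q) -> cost s t w e <= cost s t w e'.
Proof. by move=> ee'; apply: ler_sum => q _; rewrite ler_wpM2l ?coupling_ge0. Qed.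

Lemma cost_le1 e : (forall q, e q <= 1) -> cost s t w e <= 1.
Proof.
move=> e1; rewrite -coupling_sum; apply: ler_sum => q _.
by rewrite -[leRHS]mulr1 ler_wpM2l ?coupling_ge0.
Qed.

End coupling_of_pair.

Lemma coupling_from_marginals s t (w : S * S -> R) :
  (forall q, 0 <= w q) -> (forall q, q \notin supp2 s t -> w q = 0) ->
  (forall u, \sum_(v <- supp t) w (u, v) = tau s u) ->
  (forall v, \sum_(u <- supp s) w (u, v) = tau t v) ->
  coupling (tau s) (tau t) w.
Proof.
move=> w0 wout wr wc.
have w1 : \sum_(q <- supp2 s t) w q = 1.
  by rewrite big_supp2 -(sum_tau s); apply: eq_bigr => u _; rewrite wr.
split; [split|split].
- exact: w0.
- by rewrite (esumT_seq (supp2_uniq s t)) // w1.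
- move=> u; rewrite (esumT_seq (supp_uniq t)) ?wr //.
  by move=> v hv; rewrite wout // mem_supp2 (negbTE hv) andbF.
- move=> v; rewrite (esumT_seq (supp_uniq s)) ?wc //.
  by move=> u hu; rewrite wout // mem_supp2 (negbTE hu).
Qed.

Lemma product_coupling s t : coupling (tau s) (tau t) (fun q => tau s q.1 * tau t q.2).
Proof.
apply: coupling_from_marginals.
- by move=> q; rewrite mulr_ge0 // tau_ge0.
- case=> u v; rewrite mem_supp2 negb_and /= => /orP[h|h].
    by rewrite (tau_eq0 h) mul0r.
  by rewrite (tau_eq0 h) mulr0.
- by move=> u /=; rewrite -mulr_sumr sum_tau mulr1.
- by move=> v /=; rewrite -mulr_suml sum_tau mul1r.
Qed.

Lemma Delta_S2_1 {e p} : ell p.1 <> ell p.2 -> Delta tau ell e p = 1.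
Proof. by rewrite /Delta; case: eqP. Qed.

Section kantorovich.
Variables (e : S * S -> R) (p : S * S).
Hypothesis e_ge0 : forall q, 0 <= e q.

Lemma DeltaE : ell p.1 = ell p.2 -> Delta tau ell e p =
  inf [set cost p.1 p.2 w e | w in [set w | coupling (tau p.1) (tau p.2) w]].
Proof.
move=> ellp; rewrite /Delta ellp eqxx; congr inf; apply/seteqP; split.
  by move=> _ [w [wc ->]]; exists w => //; rewrite (esum_cost wc).
by move=> _ [w wc <-]; exists w; rewrite (esum_cost wc).
Qed.

Lemma Delta_le_cost w : ell p.1 = ell p.2 ->
  coupling (tau p.1) (tau p.2) w -> Delta tau ell e p <= cost p.1 p.2 w e.
Proof.
move=> ellp wc; rewrite DeltaE //; apply: ge_inf; last by exists w.
by exists 0 => _ [w' w'c <-]; apply: cost_ge0.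
Qed.

Lemma Delta_ge c : ell p.1 = ell p.2 ->
  (forall w, coupling (tau p.1) (tau p.2) w -> c <= cost p.1 p.2 w e) ->
  c <= Delta tau ell e p.
Proof.
move=> ellp cle; rewrite DeltaE //; apply: lb_le_inf; last first.
  by move=> _ [w wc <-]; apply: cle.
by eexists; exists (fun q => tau p.1 q.1 * tau p.2 q.2); first exact: product_coupling.
Qed.

End kantorovich.

Lemma Delta_unit_valued e : unit_valued e -> unit_valued (Delta tau ell e).
Proof.
move=> ue p; have e0 q : 0 <= e q by case/andP: (ue q).
have [ellp|/eqP ellp] := eqVneq (ell p.1) (ell p.2); last first.
  by rewrite Delta_S2_1 // ler01 lexx.
apply/andP; split; first by apply: Delta_ge => // w wc; apply: cost_ge0.
apply: le_trans (Delta_le_cost e0 ellp (product_coupling _ _)) _.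
by apply: (cost_le1 (product_coupling _ _)) => q; case/andP: (ue q).
Qed.

Lemma Delta_monotone e e' : (forall q, 0 <= e q) -> (forall q, e q <= e' q) ->
  forall p, Delta tau ell e p <= Delta tau ell e' p.
Proof.
move=> e0 ee' p.
have [ellp|/eqP ellp] := eqVneq (ell p.1) (ell p.2); last by rewrite !Delta_S2_1.
have e'0 q : 0 <= e' q by apply: le_trans (e0 q) (ee' q).
apply: Delta_ge => // w wc.
by apply: le_trans (Delta_le_cost e0 ellp wc) _; apply: ler_cost.
Qed.

Definition Delta_prefixed (e : S * S -> R) : Prop :=
  unit_valued e /\ forall q, Delta tau ell e q <= e q.

Local Notation d := (bisim_dist tau ell).

Lemma Delta_prefixed1 : Delta_prefixed (fun _ => 1).
Proof.
have u1 : unit_valued (fun _ : S * S => 1 : R) by move=> q; rewrite ler01 lexx.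
by split=> // q; case/andP: (Delta_unit_valued u1 q).
Qed.

Lemma bisim_dist_le e : Delta_prefixed e -> forall p, d p <= e p.
Proof.
move=> Pe p; apply: ge_inf; last by exists e.
by exists 0 => _ [e' [ue' _] <-]; case/andP: (ue' p).
Qed.

Lemma bisim_dist_ge0 p : 0 <= d p.
Proof.
apply: lb_le_inf; first by exists 1, (fun _ => 1); first exact: Delta_prefixed1.
by move=> _ [e [ue _] <-]; case/andP: (ue p).
Qed.

Lemma bisim_dist_unit_valued : unit_valued d.
Proof. by move=> p; rewrite bisim_dist_ge0 (bisim_dist_le Delta_prefixed1). Qed.

Lemma Delta_bisim_dist p : Delta tau ell d p = d p.
Proof.
have Dd_le q : Delta tau ell d q <= d q.
  apply: lb_le_inf; first by exists 1, (fun _ => 1); first exact: Delta_prefixed1.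
  move=> _ [e [ue De] <-].
  exact: le_trans (Delta_monotone bisim_dist_ge0 (bisim_dist_le (conj ue De)) q) (De q).
apply/eqP; rewrite eq_le Dd_le /=; apply: bisim_dist_le; split.
  exact: Delta_unit_valued bisim_dist_unit_valued.
move=> q; apply: Delta_monotone => // q'.
by case/andP: (Delta_unit_valued bisim_dist_unit_valued q').
Qed.

Lemma S2_q_labels x : S2_q tau ell x -> ell x.1 = ell x.2.
Proof. by move=> xq; apply: contrapT => ellx; apply: xq; right. Qed.

Lemma S2_0_complement x : ~ S2_q tau ell x -> ~ S2_1 ell x -> S2_0 tau ell x.
Proof. by move=> xq x1; apply: contrapT => x0; apply: xq => -[]. Qed.

Section reachability.
Variable T : S * S -> S * S -> R.
Hypothesis T_policy : policy tau ell T.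

Local Notation rw := (reach_within tau ell T (S2_1 ell)).
Local Notation rp := (reach_prob tau ell T (S2_1 ell)).

Lemma reach_within_S2_1 n x : S2_1 ell x -> rw n x = 1.
Proof. by move=> x1; case: n => [|n] /=; rewrite asboolT. Qed.

Lemma chainP_ge0 x y : 0 <= chainP tau ell T x y.
Proof.
rewrite /chainP; case: asboolP => xq; last by case: (y == x).
exact: coupling_ge0 (T_policy xq) y.
Qed.

Lemma reach_within_ge0 n x : 0 <= rw n x.
Proof.
elim: n x => [|n IH] x /=; case: asboolP => //= _.
apply: fine_ge0; apply: esum_ge0 => y _.
by rewrite lee_fin mulr_ge0 ?chainP_ge0.
Qed.

Lemma reach_within_succ n x : ~ S2_1 ell x -> rw n.+1 x =
  if `[< S2_q tau ell x >] then cost x.1 x.2 (T x) (rw n) else rw n x.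
Proof.
move=> x1 /=; rewrite asboolF // /chainP; case: asboolP => xq.
  exact: esum_cost (T_policy xq) _ (reach_within_ge0 n).
rewrite (esumT_seq (l := [:: x])) //=.
- by rewrite big_seq1 eqxx mul1r.
- by move=> y; rewrite mulr_ge0 ?reach_within_ge0 //; case: (y == x).
- by move=> y; rewrite inE => /negbTE ->; rewrite mul0r.
Qed.

Lemma reach_within_le1 n x : rw n x <= 1.
Proof.
elim: n x => [|n IH] x; first by rewrite /=; case: asboolP; rewrite ?ler01.
have [x1|x1] := asboolP (S2_1 ell x); first by rewrite reach_within_S2_1.
rewrite reach_within_succ //; case: asboolP => xq; last exact: IH.
exact: (cost_le1 (T_policy xq) IH).
Qed.

Lemma reach_within_nondecreasing x : nondecreasing_seq (rw ^~ x).
Proof.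
apply/nondecreasing_seqP => n; elim: n x => [|n IH] x.
  have [x1|x1] := asboolP (S2_1 ell x); first by rewrite !reach_within_S2_1.
  by have := reach_within_ge0 1 x; rewrite /= !asboolF.
have [x1|x1] := asboolP (S2_1 ell x); first by rewrite !reach_within_S2_1.
rewrite (reach_within_succ n.+1) // reach_within_succ //.
case: asboolP => xq; last exact: lexx.
exact: (ler_cost (T_policy xq) IH).
Qed.

Lemma reach_within_S2_0 n x : ~ S2_q tau ell x -> ~ S2_1 ell x -> rw n x = 0.
Proof.
move=> xq x1; elim: n => [|n IH]; first by rewrite /= asboolF.
by rewrite reach_within_succ // asboolF.
Qed.

Lemma reach_within_cvg x : rw ^~ x @ \oo --> rp x.
Proof.
apply: nondecreasing_cvgn; first exact: reach_within_nondecreasing.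
by exists 1 => _ [n _ <-]; apply: reach_within_le1.
Qed.

Lemma reach_prob_ge0 x : 0 <= rp x.
Proof.
apply: le_trans (reach_within_ge0 0 x) _; apply: ub_le_sup; last by exists 0%N.
by exists 1 => _ [n _ <-]; apply: reach_within_le1.
Qed.

Lemma reach_prob_le1 x : rp x <= 1.
Proof.
apply: ge_sup; first by exists (rw 0 x), 0%N.
by move=> _ [n _ <-]; apply: reach_within_le1.
Qed.

Lemma reach_prob_S2_1 x : S2_1 ell x -> rp x = 1.
Proof.
move=> x1; apply/eqP; rewrite eq_le reach_prob_le1 /=.
rewrite -(reach_within_S2_1 0 x1); apply: ub_le_sup; last by exists 0%N.
by exists 1 => _ [n _ <-]; apply: reach_within_le1.
Qed.

Lemma reach_prob_S2_0 x : ~ S2_q tau ell x -> ~ S2_1 ell x -> rp x = 0.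
Proof.
move=> xq x1; apply/eqP; rewrite eq_le reach_prob_ge0 andbT.
apply: ge_sup; first by exists (rw 0 x), 0%N.
by move=> _ [n _ <-]; rewrite reach_within_S2_0.
Qed.

Lemma reach_prob_le e : (forall x, 0 <= e x) -> (forall x, S2_1 ell x -> 1 <= e x) ->
  (forall x, S2_q tau ell x -> cost x.1 x.2 (T x) e <= e x) ->
  forall x, rp x <= e x.
Proof.
move=> e0 e1 e_step x; apply: ge_sup; first by exists (rw 0 x), 0%N.
move=> _ [n _ <-]; elim: n x => [|n IH] x.
  by rewrite /=; case: asboolP => [/e1|].
have [x1|x1] := asboolP (S2_1 ell x); first by rewrite reach_within_S2_1 ?e1.
rewrite reach_within_succ //; case: asboolP => xq; last exact: IH.
exact: le_trans (ler_cost (T_policy xq) IH) (e_step x xq).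
Qed.

Lemma reach_prob_S2_q x : S2_q tau ell x -> rp x = cost x.1 x.2 (T x) rp.
Proof.
move=> xq; have x1 : ~ S2_1 ell x by move=> x1; apply: xq; right.
have rw_succ_cvg : (fun n => rw n.+1 x) @ \oo --> rp x.
  by rewrite (cvg_shiftS (rw ^~ x)); apply: reach_within_cvg.
have rw_succ_cost : (fun n => rw n.+1 x) @ \oo --> cost x.1 x.2 (T x) rp.
  under eq_cvg do rewrite reach_within_succ // asboolT //.
  apply: cvg_big => // [|q _]; first exact: add_continuous.
  by apply: cvgMl_tmp; apply: reach_within_cvg.
exact: cvg_unique rw_succ_cvg rw_succ_cost.
Qed.

End reachability.

Lemma bisimilar_labels u v : bisimilar tau ell u v -> ell u = ell v.
Proof. by case=> Rl [[_ [_ [_ Rl_step]]] uv]; case: (Rl_step _ _ uv). Qed.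

Section bisimulation_coupling.
Variables (Rl : S -> S -> Prop) (s t : S).
Hypotheses (Rl_bisim : prob_bisimulation tau ell Rl) (Rl_st : Rl s t).

Let Rl_refl : forall u, Rl u u := Rl_bisim.1.
Let Rl_sym : forall u v, Rl u v -> Rl v u := Rl_bisim.2.1.
Let Rl_trans : forall u v w, Rl u v -> Rl v w -> Rl u w := Rl_bisim.2.2.1.

Definition class_mass (x u : S) : R := \sum_(y <- supp x | `[< Rl y u >]) tau x y.

Lemma class_mass_ge0 x u : 0 <= class_mass x u.
Proof. by apply: sumr_ge0 => y _; apply: tau_ge0. Qed.

Lemma class_massE x u : mass (tau x) [set y | Rl y u] = (class_mass x u)%:E.
Proof.
rewrite /mass (esum_seq _ (supp_uniq x) (tau_ge0 x) (@tau_eq0 x)).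
by congr _%:E; apply: eq_bigl => y; rewrite inE.
Qed.

Lemma class_mass_st u : class_mass s u = class_mass t u.
Proof.
have [_ mass_eq] := Rl_bisim.2.2.2 _ _ Rl_st.
by have := mass_eq u; rewrite !class_massE => -[].
Qed.

Lemma class_mass_Rl x u v : Rl u v -> class_mass x u = class_mass x v.
Proof.
move=> uv; apply: eq_bigl => y; apply/asboolP/asboolP => [yu|yv].
  exact: Rl_trans yu uv.
exact: Rl_trans yv (Rl_sym uv).
Qed.

Lemma tau_le_class_mass x u : tau x u <= class_mass x u.
Proof.
have [uin|uout] := boolP (u \in supp x); last by rewrite tau_eq0 ?class_mass_ge0.
by apply: sum_seq_ge_term => //; [apply/asboolP; apply: Rl_refl | apply: tau_ge0].
Qed.

Lemma tau_div_class_massK x u : tau x u / class_mass x u * class_mass x u = tau x u.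
Proof.
have [m0|m0] := eqVneq (class_mass x u) 0; last by rewrite divfK.
have := tau_le_class_mass x u; rewrite m0 mulr0 => tau_le0.
by apply/esym/eqP; rewrite eq_le tau_le0 tau_ge0.
Qed.

(* Inside each [Rl]-class the mass [tau s u] is spread over the [v] of the
   class in proportion to [tau t v]; the marginals are right because [tau s]
   and [tau t] give each class the same mass. *)
Definition bisim_coupling (q : S * S) : R :=
  if `[< Rl q.1 q.2 >] then tau s q.1 * tau t q.2 / class_mass s q.1 else 0.

Lemma bisim_coupling_row u : \sum_(v <- supp t) bisim_coupling (u, v) = tau s u.
Proof.
rewrite -[RHS]tau_div_class_massK [X in _ * X]class_mass_st mulr_sumr.
rewrite [RHS]big_mkcond; apply: eq_bigr => v _; rewrite /bisim_coupling /=.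
case: asboolP => uv; case: asboolP => vu //; first by rewrite mulrAC.
- by case: vu; apply: Rl_sym.
- by case: uv; apply: Rl_sym.
Qed.

Lemma bisim_coupling_col v : \sum_(u <- supp s) bisim_coupling (u, v) = tau t v.
Proof.
rewrite -[RHS]tau_div_class_massK -class_mass_st mulr_sumr.
rewrite [RHS]big_mkcond; apply: eq_bigr => u _; rewrite /bisim_coupling /=.
by case: asboolP => // uv; rewrite (class_mass_Rl s uv); ring.
Qed.

Lemma bisim_coupling_is_coupling : coupling (tau s) (tau t) bisim_coupling.
Proof.
apply: coupling_from_marginals.
- move=> q; rewrite /bisim_coupling; case: asboolP => // _.
  by rewrite divr_ge0 ?mulr_ge0 ?tau_ge0 ?class_mass_ge0.
- case=> u v; rewrite mem_supp2 negb_and /bisim_coupling /=.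
  by case: asboolP => // _ /orP[/tau_eq0 ->|/tau_eq0 ->]; rewrite ?(mul0r, mulr0).
- exact: bisim_coupling_row.
- exact: bisim_coupling_col.
Qed.

Lemma bisim_coupling_Rl u v : bisim_coupling (u, v) != 0 -> Rl u v.
Proof. by rewrite /bisim_coupling /=; case: asboolP => // _; rewrite eqxx. Qed.

End bisimulation_coupling.

Lemma bisimilar_coupling s t : bisimilar tau ell s t ->
  exists2 w, coupling (tau s) (tau t) w &
    forall u v, w (u, v) != 0 -> bisimilar tau ell u v.
Proof.
case=> Rl [Rl_bisim Rl_st]; exists (bisim_coupling Rl s t).
  exact: bisim_coupling_is_coupling.
by move=> u v /bisim_coupling_Rl uv; exists Rl.
Qed.

Lemma reach_prob_Delta_prefixed T : policy tau ell T ->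
  Delta_prefixed (reach_prob tau ell T (S2_1 ell)).
Proof.
move=> T_policy; have rp0 := reach_prob_ge0 T_policy.
split=> q; first by rewrite rp0 reach_prob_le1.
have [q1|q1] := asboolP (S2_1 ell q); first by rewrite Delta_S2_1 // reach_prob_S2_1.
have [qq|qq] := asboolP (S2_q tau ell q).
  rewrite [leRHS](reach_prob_S2_q T_policy qq).
  exact: (Delta_le_cost rp0 (S2_q_labels qq) (T_policy _ qq)).
have q0 := S2_0_complement qq q1.
have [w wc w_bisim] := bisimilar_coupling q0.
apply: le_trans (Delta_le_cost rp0 (bisimilar_labels q0) wc) _.
rewrite /cost big1_seq ?rp0 // => -[u v] _.
have [->|/w_bisim uv] := eqVneq (w (u, v)) 0; first by rewrite mul0r.
rewrite reach_prob_S2_0 ?mulr0 //; first by apply; left.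
by apply; apply: bisimilar_labels.
Qed.

Lemma bisim_dist_le_reach_prob T : policy tau ell T ->
  forall x, d x <= reach_prob tau ell T (S2_1 ell) x.
Proof. by move=> T_policy; apply/bisim_dist_le/reach_prob_Delta_prefixed. Qed.

Lemma closed_sum_proj (I : Type) (l : seq I) (f : I -> S * S) (y : R) :
  closed [set w : {ptws S * S -> R} | \sum_(i <- l) w (f i) = y].
Proof.
have sum_cont : continuous (fun w : {ptws S * S -> R} => \sum_(i <- l) w (f i)).
  by apply: continuous_big => [|i _]; [exact: add_continuous | exact: proj_continuous].
exact: (preimage_closed (fun w _ => sum_cont w) (closed_eq (y := y))).
Qed.

Definition coupling_box s t (q : S * S) : set R :=
  if q \in supp2 s t then `[0, 1]%classic else [set 0].

Lemma couplingsE s t : [set w : {ptws S * S -> R} | coupling (tau s) (tau t) w] =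
  [set w | forall q, coupling_box s t q (w q)] `&`
  (\bigcap_(u in [set: S]) [set w | \sum_(v <- supp t) w (u, v) = tau s u] `&`
   \bigcap_(v in [set: S]) [set w | \sum_(u <- supp s) w (u, v) = tau t v]).
Proof.
apply/seteqP; split=> [w wc|w [w_box [w_row w_col]]].
  split; last by split=> [u _|v _]; [exact: coupling_row | exact: coupling_col].
  move=> q; rewrite /coupling_box; case: ifP => [qst|/negbT qst].
    rewrite /= in_itv /= (coupling_ge0 wc) /= -(coupling_sum wc).
    exact: sum_seq_ge_term (supp2_uniq s t) qst _ (coupling_ge0 wc).
  exact: (coupling_eq0 wc).
apply: coupling_from_marginals.
- move=> q; have := w_box q; rewrite /coupling_box.
  by case: ifP => _ /=; [rewrite in_itv => /andP[] | move=> ->].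
- by move=> q /negbTE qst; have := w_box q; rewrite /coupling_box qst.
- by move=> u; apply: w_row.
- by move=> v; apply: w_col.
Qed.

Lemma compact_couplings s t :
  compact [set w : {ptws S * S -> R} | coupling (tau s) (tau t) w].
Proof.
rewrite couplingsE; apply: compact_closedI.
  apply: (@tychonoff _ (fun _ : S * S => R) (coupling_box s t)) => q.
  by rewrite /coupling_box; case: ifP => _; [exact: segment_compact | exact: compact_set1].
by apply: closedI; apply: closed_bigI => *; apply: closed_sum_proj.
Qed.

Lemma optimal_coupling s t (e : S * S -> R) :
  exists2 w, coupling (tau s) (tau t) w &
    forall w', coupling (tau s) (tau t) w' -> cost s t w e <= cost s t w' e.
Proof.
have cost_cont : continuous (fun w : {ptws S * S -> R} => cost s t w e).
  rewrite /cost; apply: continuous_big => [|q _ w]; first exact: add_continuous.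
  by apply: continuousM; [exact: proj_continuous | exact: cst_continuous].
have couplings0 : [set w : {ptws S * S -> R} | coupling (tau s) (tau t) w] !=set0.
  by exists (fun q => tau s q.1 * tau t q.2); apply: product_coupling.
have [w] := compact_EVT_min couplings0 (@compact_couplings s t)
  (continuous_subspaceT cost_cont).
by rewrite inE => wc w_min; exists w => // w' w'c; apply: w_min; rewrite inE.
Qed.

Lemma optimal_policy : exists2 T, policy tau ell T &
  forall x, reach_prob tau ell T (S2_1 ell) x <= d x.
Proof.
have opt p : exists w, ell p.1 = ell p.2 ->
    coupling (tau p.1) (tau p.2) w /\ cost p.1 p.2 w d <= d p.
  have [w wc w_min] := optimal_coupling p.1 p.2 d.
  exists w => ellp; split => //; rewrite -[leRHS]Delta_bisim_dist.
  by apply: Delta_ge => //; apply: bisim_dist_ge0.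
have [T T_opt] := choice opt.
have T_policy : policy tau ell T by move=> p /S2_q_labels /T_opt[].
exists T => //; apply: reach_prob_le => // [x|x x1|x /S2_q_labels /T_opt[] //].
  exact: bisim_dist_ge0.
by rewrite -Delta_bisim_dist (Delta_S2_1 x1).
Qed.

End LMC.

Lemma LMC_supports (R : realType) (S : countType) (tau : S -> S -> R) :
  is_LMC tau -> exists2 supp : S -> seq S,
    forall s, uniq (supp s) & forall s u, tau s u != 0 -> u \in supp s.
Proof.
move=> tau_LMC.
have supp_ex s : exists l : seq S, uniq l /\ forall u, tau s u != 0 -> u \in l.
  have [_ /finite_seqP [l supp_l]] := tau_LMC s.
  exists (undup l); split => [|u tau_su]; first exact: undup_uniq.
  have : [set u | tau s u != 0] u by [].
  by rewrite supp_l /= mem_undup.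
by have [supp supp_spec] := choice supp_ex; exists supp => s; case: (supp_spec s).
Qed.

Theorem mainTheorem9 (R : realType) (S : countType) (L : finType)
  (tau : S -> S -> R) (ell : S -> L) :
  is_LMC tau ->
  exists T : S * S -> S * S -> R,
    policy tau ell T /\
    forall (s t : S) (T' : S * S -> S * S -> R),
      policy tau ell T' ->
      bisim_dist tau ell (s, t) = reach_prob tau ell T (S2_1 ell) (s, t) /\
      reach_prob tau ell T (S2_1 ell) (s, t) <= reach_prob tau ell T' (S2_1 ell) (s, t).
Proof.
move=> tau_LMC; have [supp supp_uniq supp_spec] := LMC_supports tau_LMC.
have [T T_policy T_le_d] := optimal_policy ell tau_LMC supp_uniq supp_spec.
have d_le := bisim_dist_le_reach_prob tau_LMC supp_uniq supp_spec.
exists T; split => // s t T' T'_policy; split.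
  by apply/eqP; rewrite eq_le T_le_d d_le.
by apply: le_trans (T_le_d _) _; apply: d_le.
Qed.
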